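(* Let $p=1$, $0<q<1$, $\lambda>0$, and $K:=(v\lambda q(1-q))^{\frac1{2-q}}$. Let $\{x^k\}$ be generated by PGM-GSO with stepsize $0<v<\frac12\|A\|_2^{-2}$. Then: (i) for every $i\in\{1,\dots,r\}$ and every $k\ge1$, if $x^k_{\mathcal{G}_i}\ne0$ then $\|x^k_{\mathcal{G}_i}\|_1\ge K$; (ii) there exist $N\in\mathbb{N}$ and $\mathcal{I}\subseteq\{1,\dots,r\}$ such that for all $k\ge N$: $x^k_{\mathcal{G}_i}\ne0$ for $i\in\mathcal{I}$ and $x^k_{\mathcal{G}_i}=0$ for $i\notin\mathcal{I}$.
   Context: Group structure: $\{1,\dots,n\}$ is partitioned into disjoint nonempty index sets $\mathcal{G}_1,\dots,\mathcal{G}_r$; $x_{\mathcal{G}_i}$ is the subvector indexed by $\mathcal{G}_i$; $\|x\|_{1,q}^q:=\sum_{i=1}^r\|x_{\mathcal{G}_i}\|_1^q$. Given $A\in\mathbb{R}^{m\times n}$, $b\in\mathbb{R}^m$, PGM-GSO: choose $x^0\in\mathbb{R}^n$ and for $k\ge0$ set $z^k=x^k-2vA^\top(Ax^k-b)$ and choose $x^{k+1}\in\operatorname{Arg\,min}_{x\in\mathbb{R}^n}\{\lambda\|x\|_{1,q}^q+\frac1{2v}\|x-z^k\|_2^2\}$. *)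

From Stdlib Require Import Reals Lra.
Open Scope R_scope.

Fixpoint rsum (n : nat) (f : nat -> R) : R :=
  match n with O => 0 | S n' => rsum n' f + f n' end.

(* real power with 0^q = 0 (Stdlib's Rpower 0 q = 1); used only on nonneg bases *)
Definition rpow (x q : R) : R :=
  if Rle_dec x 0 then 0 else Rpower x q.

(* vectors of R^n are functions nat -> R, only indices < n matter;
   a matrix A in R^{m x n} is A : nat -> nat -> R with entries A a j, a < m, j < n *)
Definition matvec (m n : nat) (A : nat -> nat -> R) (x : nat -> R) : nat -> R :=
  fun a => rsum n (fun j => A a j * x j).
Definition tmatvec (m n : nat) (A : nat -> nat -> R) (w : nat -> R) : nat -> R :=
  fun j => rsum m (fun a => A a j * w a).

Definition norm2 (n : nat) (x : nat -> R) : R := sqrt (rsum n (fun j => x j ^ 2)).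

Definition is_spectral_norm (m n : nat) (A : nat -> nat -> R) (s : R) : Prop :=
  is_lub (fun t => exists x : nat -> R, norm2 n x <= 1 /\ t = norm2 m (matvec m n A x)) s.

(* Group structure: grp j is the (0-based) index of the group containing coordinate j.
   It is a partition of {0..n-1} into r nonempty groups G_0..G_{r-1}. *)
Definition is_group_partition (n r : nat) (grp : nat -> nat) : Prop :=
  (forall j, (j < n)%nat -> (grp j < r)%nat) /\
  (forall i, (i < r)%nat -> exists j, (j < n)%nat /\ grp j = i).

Definition gnorm1 (n : nat) (grp : nat -> nat) (x : nat -> R) (i : nat) : R :=
  rsum n (fun j => if Nat.eqb (grp j) i then Rabs (x j) else 0).

Definition group_zero (n : nat) (grp : nat -> nat) (x : nat -> R) (i : nat) : Prop :=
  forall j, (j < n)%nat -> grp j = i -> x j = 0.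

Definition gso_pen (n r : nat) (grp : nat -> nat) (q : R) (x : nat -> R) : R :=
  rsum r (fun i => rpow (gnorm1 n grp x i) q).

Definition grad_step (m n : nat) (A : nat -> nat -> R) (b : nat -> R) (v : R)
  (x : nat -> R) : nat -> R :=
  fun j => x j - 2 * v * tmatvec m n A (fun a => matvec m n A x a - b a) j.

Definition prox_obj (n r : nat) (grp : nat -> nat) (lam q v : R) (z y : nat -> R) : R :=
  lam * gso_pen n r grp q y + / (2 * v) * rsum n (fun j => (y j - z j) ^ 2).

Definition pgm_gso (m n r : nat) (grp : nat -> nat) (A : nat -> nat -> R) (b : nat -> R)
  (lam q v : R) (x : nat -> nat -> R) : Prop :=
  forall k, forall y : nat -> R,
    prox_obj n r grp lam q v (grad_step m n A b v (x k)) (x (S k))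
    <= prox_obj n r grp lam q v (grad_step m n A b v (x k)) y.

From Stdlib Require Import Reals Lra Lia Psatz Classical.
Open Scope R_scope.

(* (i) Scaling the group G_i of a prox minimizer y by t >= 0 cannot decrease the prox
   objective; comparing with t = 0 and t = e bounds ||y_{G_i}||_2^2 from below by
   v lam q (1-q) ||y_{G_i}||_1^q, and ||y_{G_i}||_2 <= ||y_{G_i}||_1 gives
   ||y_{G_i}||_1^(2-q) >= v lam q (1-q).
   (ii) Since 2 v ||A||^2 < 1, the objective ||A x - b||^2 + lam ||x||_{1,q}^q decreases
   by a fixed multiple of ||x^{k+1} - x^k||^2 at every step, so the steps eventually become
   smaller than K / (n + 1) coordinatewise, where K = (v lam q (1-q))^(1/(2-q)). A group cannot then switch between zero and
   nonzero, because by (i) a nonzero group has l1-norm at least K. *)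

Lemma rsum_ext n f g : (forall j, (j < n)%nat -> f j = g j) -> rsum n f = rsum n g.
Proof.
  induction n as [|n IH]; intros H; simpl; [reflexivity|].
  rewrite IH by (intros; apply H; lia). rewrite H by lia. reflexivity.
Qed.

Lemma rsum_plus n f g : rsum n (fun j => f j + g j) = rsum n f + rsum n g.
Proof. induction n as [|n IH]; simpl; [lra|]. rewrite IH; ring. Qed.

Lemma rsum_scal n c f : rsum n (fun j => c * f j) = c * rsum n f.
Proof. induction n as [|n IH]; simpl; [ring|]. rewrite IH; ring. Qed.

Lemma rsum_lincomb3 n f g h a c :
  rsum n (fun j => f j + a * g j + c * h j) = rsum n f + a * rsum n g + c * rsum n h.
Proof. induction n as [|n IH]; simpl; [ring|]. rewrite IH; ring. Qed.

Lemma rsum_const0 n : rsum n (fun _ => 0) = 0.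
Proof. induction n as [|n IH]; simpl; [reflexivity|]. rewrite IH; ring. Qed.

Lemma rsum_le n f g : (forall j, (j < n)%nat -> f j <= g j) -> rsum n f <= rsum n g.
Proof.
  induction n as [|n IH]; intros H; simpl; [lra|].
  apply Rplus_le_compat; [apply IH; intros; apply H|apply H]; lia.
Qed.

Lemma rsum_nonneg n f : (forall j, (j < n)%nat -> 0 <= f j) -> 0 <= rsum n f.
Proof. intros H. rewrite <- (rsum_const0 n). apply rsum_le, H. Qed.

Lemma rsum_ge_term n f j0 :
  (forall j, (j < n)%nat -> 0 <= f j) -> (j0 < n)%nat -> f j0 <= rsum n f.
Proof.
  induction n as [|n IH]; intros H Hj0; simpl; [lia|].
  assert (0 <= rsum n f) by (apply rsum_nonneg; intros; apply H; lia).
  destruct (Nat.eq_dec j0 n) as [->|Hne]; [lra|].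
  assert (f j0 <= rsum n f) by (apply IH; [intros; apply H|]; lia).
  assert (0 <= f n) by (apply H; lia). lra.
Qed.

Lemma rsum_le_const n f M : (forall j, (j < n)%nat -> f j <= M) -> rsum n f <= INR n * M.
Proof.
  intros H. apply Rle_trans with (rsum n (fun _ => M)); [now apply rsum_le|].
  clear H. induction n as [|n IH]; simpl rsum; [simpl; lra|]. rewrite S_INR. lra.
Qed.

Lemma rsum_swap m n (F : nat -> nat -> R) :
  rsum m (fun a => rsum n (fun j => F a j)) = rsum n (fun j => rsum m (fun a => F a j)).
Proof.
  induction m as [|m IH]; simpl; [now rewrite rsum_const0|].
  rewrite IH, <- rsum_plus. reflexivity.
Qed.

Lemma rsum_update r f f' i : (i < r)%nat -> (forall j, j <> i -> f' j = f j) ->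
  rsum r f' = rsum r f - f i + f' i.
Proof.
  induction r as [|r IH]; intros Hi H; simpl; [lia|].
  destruct (Nat.eq_dec i r) as [->|Hne].
  - rewrite (rsum_ext r f' f) by (intros; apply H; lia). ring.
  - rewrite IH by (auto; lia). rewrite (H r) by lia. ring.
Qed.

Lemma rsum_abs n f : Rabs (rsum n f) <= rsum n (fun j => Rabs (f j)).
Proof.
  induction n as [|n IH]; simpl; [rewrite Rabs_R0; lra|].
  eapply Rle_trans; [apply Rabs_triang|lra].
Qed.

Lemma sq_le_rsum_sq n w j : (j < n)%nat -> w j ^ 2 <= rsum n (fun j => w j ^ 2).
Proof. intros Hj. apply (rsum_ge_term n (fun j => w j ^ 2)); [intros; nra|exact Hj]. Qed.

Lemma rsum_sq_le_sq n g :
  (forall j, (j < n)%nat -> 0 <= g j) -> rsum n (fun j => g j ^ 2) <= rsum n g ^ 2.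
Proof.
  induction n as [|n IH]; intros H; simpl; [lra|].
  assert (rsum n (fun j => g j ^ 2) <= rsum n g ^ 2) by (apply IH; intros; apply H; lia).
  assert (0 <= rsum n g) by (apply rsum_nonneg; intros; apply H; lia).
  assert (0 <= g n) by (apply H; lia).
  simpl in *. nra.
Qed.

Definition scale_group (grp : nat -> nat) (i : nat) (t : R) (y : nat -> R) : nat -> R :=
  fun j => if Nat.eqb (grp j) i then t * y j else y j.

Definition gsqnorm2 (n : nat) (grp : nat -> nat) (y : nat -> R) (i : nat) : R :=
  rsum n (fun j => if Nat.eqb (grp j) i then y j ^ 2 else 0).
Definition ginner (n : nat) (grp : nat -> nat) (y z : nat -> R) (i : nat) : R :=
  rsum n (fun j => if Nat.eqb (grp j) i then y j * z j else 0).

Section GroupScaling.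

Variables (n : nat) (grp : nat -> nat).

Lemma gnorm1_pos y i : ~ group_zero n grp y i -> 0 < gnorm1 n grp y i.
Proof.
  intros Hnz. apply not_all_ex_not in Hnz as [j Hj].
  apply imply_to_and in Hj as [Hjn Hj]. apply imply_to_and in Hj as [Hgj Hyj].
  assert (Hterm : (if Nat.eqb (grp j) i then Rabs (y j) else 0) <= gnorm1 n grp y i).
  { apply (rsum_ge_term n (fun j => if Nat.eqb (grp j) i then Rabs (y j) else 0)); [|exact Hjn].
    intros j' _. destruct (Nat.eqb (grp j') i); [apply Rabs_pos|lra]. }
  rewrite (proj2 (Nat.eqb_eq _ _) Hgj) in Hterm.
  assert (0 < Rabs (y j)) by (apply Rabs_pos_lt, Hyj). lra.
Qed.

Lemma gsqnorm2_le_gnorm1_sq y i : gsqnorm2 n grp y i <= gnorm1 n grp y i ^ 2.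
Proof.
  unfold gsqnorm2, gnorm1.
  rewrite (rsum_ext n _ (fun j => (if Nat.eqb (grp j) i then Rabs (y j) else 0) ^ 2)).
  - apply rsum_sq_le_sq. intros j _. destruct (Nat.eqb (grp j) i); [apply Rabs_pos|lra].
  - intros j _. destruct (Nat.eqb (grp j) i); [symmetry; apply pow2_abs|ring].
Qed.

Lemma gnorm1_scale_group_same i t y :
  0 <= t -> gnorm1 n grp (scale_group grp i t y) i = t * gnorm1 n grp y i.
Proof.
  intros Ht. unfold gnorm1. rewrite <- rsum_scal. apply rsum_ext. intros j _.
  unfold scale_group. destruct (Nat.eqb (grp j) i); [|ring].
  rewrite Rabs_mult, Rabs_pos_eq by exact Ht. reflexivity.
Qed.

Lemma gnorm1_scale_group_other i i' t y :
  i' <> i -> gnorm1 n grp (scale_group grp i t y) i' = gnorm1 n grp y i'.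
Proof.
  intros Hi. unfold gnorm1. apply rsum_ext. intros j _. unfold scale_group.
  destruct (Nat.eqb (grp j) i') eqn:E'; [|reflexivity].
  destruct (Nat.eqb (grp j) i) eqn:E; [|reflexivity].
  apply Nat.eqb_eq in E, E'. lia.
Qed.

Lemma gso_pen_scale_group r q i t y : (i < r)%nat -> 0 <= t ->
  gso_pen n r grp q (scale_group grp i t y) =
  gso_pen n r grp q y - rpow (gnorm1 n grp y i) q + rpow (t * gnorm1 n grp y i) q.
Proof.
  intros Hi Ht. unfold gso_pen.
  rewrite (rsum_update r (fun i' => rpow (gnorm1 n grp y i') q) _ i Hi).
  - rewrite gnorm1_scale_group_same by exact Ht. reflexivity.
  - intros i' Hi'. rewrite gnorm1_scale_group_other by exact Hi'. reflexivity.
Qed.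

Lemma sqdist_scale_group i t y z :
  rsum n (fun j => (scale_group grp i t y j - z j) ^ 2) =
  rsum n (fun j => (y j - z j) ^ 2)
  + (t ^ 2 - 1) * gsqnorm2 n grp y i - 2 * (t - 1) * ginner n grp y z i.
Proof.
  unfold gsqnorm2, ginner.
  rewrite (rsum_ext n _ (fun j => (y j - z j) ^ 2
    + (t ^ 2 - 1) * (if Nat.eqb (grp j) i then y j ^ 2 else 0)
    + (- (2 * (t - 1))) * (if Nat.eqb (grp j) i then y j * z j else 0))).
  - rewrite rsum_lincomb3. ring.
  - intros j _. unfold scale_group. destruct (Nat.eqb (grp j) i); ring.
Qed.

End GroupScaling.

Lemma rpow_of_pos a q : 0 < a -> rpow a q = Rpower a q.
Proof. intros Ha. unfold rpow. destruct (Rle_dec a 0); [lra|reflexivity]. Qed.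

Lemma rpow_of_nonpos a q : a <= 0 -> rpow a q = 0.
Proof. intros Ha. unfold rpow. destruct (Rle_dec a 0); [reflexivity|lra]. Qed.

Lemma rpow_nonneg a q : 0 <= rpow a q.
Proof. unfold rpow. destruct (Rle_dec a 0); [lra|left; apply exp_pos]. Qed.

Lemma Rpower_2_minus_mul s q : 0 < s -> Rpower s (2 - q) * Rpower s q = s ^ 2.
Proof.
  intros Hs. rewrite <- Rpower_plus. replace (2 - q + q) with (INR 2) by (simpl; ring).
  apply Rpower_pow, Hs.
Qed.

Lemma rpow_inv_le (c s p : R) :
  0 < c -> 0 < s -> 0 < p -> c <= Rpower s p -> rpow c (/ p) <= s.
Proof.
  intros Hc Hs Hp Hcs. rewrite rpow_of_pos by exact Hc.
  replace s with (Rpower (Rpower s p) (/ p)).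
  - apply Rle_Rpower_l; [left; apply Rinv_0_lt_compat, Hp|split; assumption].
  - rewrite Rpower_mult, Rinv_r, Rpower_1 by lra. reflexivity.
Qed.

(* Two-point version of the second-order condition of t |-> lam P t^q + (t^2 a - 2 t c)/(2v)
   at its minimizer t = 1: compare with t = 0 and t = e, using e^q (2 - q) <= e. *)
Lemma two_point_curvature_bound (lam q v P a c : R) :
  0 < q -> q < 1 -> 0 < lam -> 0 < v -> 0 < P ->
  0 <= lam * (0 - P) + / (2 * v) * ((0 ^ 2 - 1) * a - 2 * (0 - 1) * c) ->
  0 <= lam * (exp q * P - P) + / (2 * v) * ((exp 1 ^ 2 - 1) * a - 2 * (exp 1 - 1) * c) ->
  v * lam * q * (1 - q) * P <= a.
Proof.
  intros Hq Hq1 Hlam Hv HP H0 He.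
  assert (Hmul2v : forall X Y, 0 <= X + / (2 * v) * Y -> 0 <= 2 * v * X + Y).
  { intros X Y H. replace (2 * v * X + Y) with (2 * v * (X + / (2 * v) * Y)) by (field; lra).
    apply Rmult_le_pos; lra. }
  apply Hmul2v in H0, He.
  assert (HE : exp q * (2 - q) <= exp 1).
  { replace (exp 1) with (exp q * exp (1 - q)) by (rewrite <- exp_plus; f_equal; ring).
    apply Rmult_le_compat_l; [left; apply exp_pos|].
    generalize (exp_ineq1_le (1 - q)). lra. }
  set (e := exp 1) in *. set (E := exp q) in *.
  assert (He2 : 2 < e) by (unfold e; generalize (exp_ineq1 1 ltac:(lra)); lra).
  assert (He3 : e <= 3) by apply exp_le_3.
  set (W := v * lam * P).
  assert (HW : 0 < W) by (unfold W; repeat apply Rmult_lt_0_compat; lra).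
  assert (H0' : 2 * W + a <= 2 * c) by (unfold W; lra).
  assert (He' : 0 <= 2 * W * (E - 1) + (e ^ 2 - 1) * a - 2 * (e - 1) * c) by (unfold W; lra).
  assert (Hgap : 2 * W * (e - E) <= e * (e - 1) * a) by nra.
  assert (Hcmp : e * (1 - q) <= (2 - q) * (e - E)) by lra.
  assert (HEe : E < e) by (assert (0 < E) by apply exp_pos; nra).
  assert (Ha : 0 <= a).
  { assert (0 < 2 * W * (e - E)) by (apply Rmult_lt_0_compat; lra).
    assert (0 < e * (e - 1)) by nra. nra. }
  assert (Hlin : 2 * W * (1 - q) <= (2 - q) * (e - 1) * a).
  { apply (Rmult_le_reg_l e); [lra|].
    assert (2 * W * (e * (1 - q)) <= 2 * W * ((2 - q) * (e - E)))
      by (apply Rmult_le_compat_l; lra).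
    assert ((2 - q) * (2 * W * (e - E)) <= (2 - q) * (e * (e - 1) * a))
      by (apply Rmult_le_compat_l; lra).
    nra. }
  assert (Hq2 : q * (2 - q) * (e - 1) <= 2).
  { assert (q * (2 - q) <= 1) by nra.
    apply Rle_trans with (1 * 2); [apply Rmult_le_compat; nra|lra]. }
  assert (q * (2 * W * (1 - q)) <= q * ((2 - q) * (e - 1) * a))
    by (apply Rmult_le_compat_l; lra).
  unfold W in *. nra.
Qed.

Section ProxMinimizer.

Variables (n r : nat) (grp : nat -> nat) (lam q v : R) (z y : nat -> R).
Hypothesis y_min : forall y', prox_obj n r grp lam q v z y <= prox_obj n r grp lam q v z y'.

Lemma prox_min_scale_group i t : (i < r)%nat -> 0 <= t ->
  0 <= lam * (rpow (t * gnorm1 n grp y i) q - rpow (gnorm1 n grp y i) q)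
       + / (2 * v) * ((t ^ 2 - 1) * gsqnorm2 n grp y i - 2 * (t - 1) * ginner n grp y z i).
Proof.
  intros Hi Ht. generalize (y_min (scale_group grp i t y)). unfold prox_obj.
  rewrite gso_pen_scale_group, sqdist_scale_group by assumption. lra.
Qed.

Lemma prox_min_gnorm1_lower_bound i :
  0 < q -> q < 1 -> 0 < lam -> 0 < v -> (i < r)%nat -> ~ group_zero n grp y i ->
  rpow (v * lam * q * (1 - q)) (/ (2 - q)) <= gnorm1 n grp y i.
Proof.
  intros Hq Hq1 Hlam Hv Hi Hnz.
  set (s := gnorm1 n grp y i).
  assert (Hs : 0 < s) by (apply gnorm1_pos, Hnz).
  set (P := Rpower s q).
  assert (HP : 0 < P) by apply exp_pos.
  assert (Hcurv : v * lam * q * (1 - q) * P <= gsqnorm2 n grp y i).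
  { apply (two_point_curvature_bound lam q v P _ (ginner n grp y z i)); try assumption.
    - generalize (prox_min_scale_group i 0 Hi (Rle_refl 0)). fold s.
      rewrite Rmult_0_l, rpow_of_nonpos, rpow_of_pos by lra. trivial.
    - generalize (prox_min_scale_group i (exp 1) Hi (Rlt_le _ _ (exp_pos 1))). fold s.
      assert (He : 0 < exp 1) by apply exp_pos.
      rewrite !rpow_of_pos, <- Rpower_mult_distr by (try apply Rmult_lt_0_compat; lra).
      unfold Rpower at 1. rewrite ln_exp, Rmult_1_r. trivial. }
  assert (Hsq : gsqnorm2 n grp y i <= Rpower s (2 - q) * P).
  { unfold P. rewrite Rpower_2_minus_mul by exact Hs. apply gsqnorm2_le_gnorm1_sq. }
  apply rpow_inv_le; try lra.
  - repeat apply Rmult_lt_0_compat; lra.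
  - apply (Rmult_le_reg_r P); lra.
Qed.

End ProxMinimizer.

Lemma matvec_scal m n A c w a : matvec m n A (fun j => c * w j) a = c * matvec m n A w a.
Proof. unfold matvec. rewrite <- rsum_scal. apply rsum_ext. intros; ring. Qed.

Lemma rsum_mul_matvec m n A w d :
  rsum m (fun a => w a * matvec m n A d a) = rsum n (fun j => d j * tmatvec m n A w j).
Proof.
  unfold matvec, tmatvec.
  rewrite (rsum_ext m _ (fun a => rsum n (fun j => d j * (A a j * w a)))).
  - rewrite rsum_swap. apply rsum_ext. intros j _. apply rsum_scal.
  - intros a _. rewrite <- rsum_scal. apply rsum_ext. intros; ring.
Qed.

Lemma rsum_sq_le_1 n w : norm2 n w <= 1 -> rsum n (fun j => w j ^ 2) <= 1.
Proof.
  unfold norm2. intros Hw.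
  assert (H0 : 0 <= rsum n (fun j => w j ^ 2)) by (apply rsum_nonneg; intros; nra).
  rewrite <- (pow2_sqrt _ H0). generalize (sqrt_pos (rsum n (fun j => w j ^ 2))). nra.
Qed.

Lemma spectral_norm_exists m n A : exists s, is_spectral_norm m n A s.
Proof.
  apply upper_bound_thm.
  - exists (sqrt (rsum m (fun a => rsum n (fun j => Rabs (A a j)) ^ 2))).
    intros t [w [Hw ->]]. apply sqrt_le_1_alt, rsum_le. intros a _.
    assert (Hb : Rabs (matvec m n A w a) <= rsum n (fun j => Rabs (A a j))).
    { eapply Rle_trans; [apply rsum_abs|]. apply rsum_le. intros j Hj.
      assert (Hwj : w j ^ 2 <= 1)
        by (eapply Rle_trans; [apply sq_le_rsum_sq, Hj|apply rsum_sq_le_1, Hw]).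
      rewrite <- pow2_abs in Hwj. rewrite Rabs_mult.
      generalize (Rabs_pos (w j)) (Rabs_pos (A a j)). nra. }
    rewrite <- pow2_abs. generalize (Rabs_pos (matvec m n A w a)). nra.
  - exists (norm2 m (matvec m n A (fun _ => 0))), (fun _ => 0). split; [|reflexivity].
    unfold norm2. rewrite (rsum_ext n _ (fun _ => 0)) by (intros; ring).
    rewrite rsum_const0, sqrt_0. lra.
Qed.

Lemma spectral_norm_bound m n A s w : is_spectral_norm m n A s ->
  rsum m (fun a => matvec m n A w a ^ 2) <= s ^ 2 * rsum n (fun j => w j ^ 2).
Proof.
  intros [Hub _]. set (W := rsum n (fun j => w j ^ 2)).
  assert (HW0 : 0 <= W) by (apply rsum_nonneg; intros; nra).
  destruct (Req_dec W 0) as [HW|HW].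
  - assert (Hz : forall j, (j < n)%nat -> w j = 0).
    { intros j Hj. assert (w j ^ 2 <= W) by (apply sq_le_rsum_sq, Hj). nra. }
    rewrite (rsum_ext m _ (fun _ => 0)), rsum_const0, HW; [lra|].
    intros a _. unfold matvec.
    rewrite (rsum_ext n _ (fun _ => 0)), rsum_const0; [ring|].
    intros j Hj. rewrite Hz by exact Hj. ring.
  - (* test the supremum on the unit vector w / ||w||_2 *)
    set (c := / sqrt W).
    assert (Hc2 : c ^ 2 = / W) by (unfold c; rewrite pow_inv, pow2_sqrt; lra).
    assert (Hu : norm2 n (fun j => c * w j) <= 1).
    { unfold norm2. rewrite (rsum_ext n _ (fun j => c ^ 2 * w j ^ 2)) by (intros; ring).
      rewrite rsum_scal. fold W. rewrite Hc2, Rinv_l, sqrt_1 by lra. lra. }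
    generalize (Hub _ (ex_intro _ _ (conj Hu eq_refl))). unfold norm2.
    rewrite (rsum_ext m _ (fun a => c ^ 2 * matvec m n A w a ^ 2))
      by (intros; rewrite matvec_scal; ring).
    rewrite rsum_scal, Hc2. intros Hs.
    set (L := rsum m (fun a => matvec m n A w a ^ 2)) in *.
    assert (HL : 0 <= / W * L)
      by (apply Rmult_le_pos; [left; apply Rinv_0_lt_compat|apply rsum_nonneg; intros; nra]; lra).
    assert (/ W * L <= s ^ 2).
    { rewrite <- (pow2_sqrt _ HL). generalize (sqrt_pos (/ W * L)). nra. }
    apply (Rmult_le_reg_l (/ W)); [apply Rinv_0_lt_compat; lra|].
    replace (/ W * (s ^ 2 * W)) with (s ^ 2) by (field; lra). assumption.
Qed.

Definition gso_obj (m n r : nat) (grp : nat -> nat) (A : nat -> nat -> R) (b : nat -> R)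
  (lam q : R) (x : nat -> R) : R :=
  rsum m (fun a => (matvec m n A x a - b a) ^ 2) + lam * gso_pen n r grp q x.

Section Descent.

Variables (m n r : nat) (grp : nat -> nat) (A : nat -> nat -> R) (b : nat -> R)
  (lam q v s : R) (x y : nat -> R).

(* half the gradient of ||A x - b||^2 at x *)
Let g := tmatvec m n A (fun a => matvec m n A x a - b a).
Let D := rsum n (fun j => (y j - x j) ^ 2).
Let G := rsum n (fun j => (y j - x j) * g j).

Lemma residual_sq_le_expand : is_spectral_norm m n A s ->
  rsum m (fun a => (matvec m n A y a - b a) ^ 2)
  <= rsum m (fun a => (matvec m n A x a - b a) ^ 2) + 2 * G + s ^ 2 * D.
Proof.
  intros Hs.
  set (rx := fun a => matvec m n A x a - b a).
  set (Ad := matvec m n A (fun j => y j - x j)).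
  assert (Hexp : rsum m (fun a => (matvec m n A y a - b a) ^ 2)
    = rsum m (fun a => rx a ^ 2) + 2 * rsum m (fun a => rx a * Ad a) + 1 * rsum m (fun a => Ad a ^ 2)).
  { rewrite <- rsum_lincomb3. apply rsum_ext. intros a _.
    assert (Hy : matvec m n A y a = matvec m n A x a + Ad a).
    { unfold Ad, matvec. rewrite <- rsum_plus. apply rsum_ext. intros; ring. }
    rewrite Hy. unfold rx. ring. }
  assert (Hcross : rsum m (fun a => rx a * Ad a) = G) by apply rsum_mul_matvec.
  assert (Hquad : rsum m (fun a => Ad a ^ 2) <= s ^ 2 * D) by (apply spectral_norm_bound, Hs).
  rewrite Hexp, Hcross. unfold rx. lra.
Qed.

Lemma prox_step_decrease : 0 < v ->
  (forall y', prox_obj n r grp lam q v (grad_step m n A b v x) y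
              <= prox_obj n r grp lam q v (grad_step m n A b v x) y') ->
  lam * gso_pen n r grp q y + / (2 * v) * D + 2 * G <= lam * gso_pen n r grp q x.
Proof.
  intros Hv Hmin. generalize (Hmin x). unfold prox_obj.
  set (g2 := rsum n (fun j => g j ^ 2)).
  assert (Hy : rsum n (fun j => (y j - grad_step m n A b v x j) ^ 2) = D + 4 * v * G + 4 * v ^ 2 * g2).
  { unfold D, G, g2. rewrite <- rsum_lincomb3. apply rsum_ext. intros j _.
    unfold grad_step. fold g. ring. }
  assert (Hx : rsum n (fun j => (x j - grad_step m n A b v x j) ^ 2) = 4 * v ^ 2 * g2).
  { unfold g2. rewrite <- rsum_scal. apply rsum_ext. intros j _.
    unfold grad_step. fold g. ring. }
  rewrite Hy, Hx.
  replace (/ (2 * v) * (D + 4 * v * G + 4 * v ^ 2 * g2))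
    with (/ (2 * v) * D + 2 * G + / (2 * v) * (4 * v ^ 2 * g2)) by (field; lra).
  lra.
Qed.

Lemma gso_obj_descent : 0 < v -> is_spectral_norm m n A s ->
  (forall y', prox_obj n r grp lam q v (grad_step m n A b v x) y
              <= prox_obj n r grp lam q v (grad_step m n A b v x) y') ->
  gso_obj m n r grp A b lam q y <= gso_obj m n r grp A b lam q x - (/ (2 * v) - s ^ 2) * D.
Proof.
  intros Hv Hs Hmin. unfold gso_obj.
  generalize (residual_sq_le_expand Hs) (prox_step_decrease Hv Hmin). lra.
Qed.

End Descent.

Lemma eventually_lt_of_decrease (F D : nat -> R) c dl : 0 < c -> 0 < dl ->
  (forall k, 0 <= F k) -> (forall k, 0 <= D k) -> (forall k, F (S k) <= F k - c * D k) ->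
  exists N, forall k, (N <= k)%nat -> D k < dl.
Proof.
  intros Hc Hdl HF HD Hdec. apply NNPP. intros Hnot.
  assert (Hfreq : forall N, exists k, (N <= k)%nat /\ dl <= D k).
  { intros N. apply NNPP. intros Hnk. apply Hnot. exists N. intros k Hk.
    apply Rnot_le_lt. intros Hle. apply Hnk. exists k. split; assumption. }
  assert (Hanti : forall k k', (k <= k')%nat -> F k' <= F k).
  { intros k k' Hk. induction Hk as [|k' _ IH]; [lra|].
    specialize (Hdec k'). specialize (HD k'). nra. }
  assert (Hdrop : forall p, exists k, F k <= F 0%nat - INR p * (c * dl)).
  { induction p as [|p [k Hk]]; [exists 0%nat; simpl; lra|].
    destruct (Hfreq k) as [k' [Hkk' Hdk']].
    exists (S k'). rewrite S_INR.
    specialize (Hanti _ _ Hkk'). specialize (Hdec k'). nra. }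
  destruct (INR_archimed (c * dl) (F 0%nat)) as [p Hp]; [nra|].
  destruct (Hdrop p) as [k Hk]. specialize (HF k). lra.
Qed.

Lemma pgm_gso_steps_eventually_small m n r grp A b lam q v x dl :
  0 < lam -> 0 < v -> (forall s, is_spectral_norm m n A s -> 2 * v * s ^ 2 < 1) ->
  pgm_gso m n r grp A b lam q v x -> 0 < dl ->
  exists N, forall k, (N <= k)%nat -> forall j, (j < n)%nat -> Rabs (x (S k) j - x k j) < dl.
Proof.
  intros Hlam Hv Hspec Hpgm Hdl.
  destruct (spectral_norm_exists m n A) as [s Hs].
  assert (Hc : 0 < / (2 * v) - s ^ 2).
  { specialize (Hspec s Hs). apply Rlt_0_minus, (Rmult_lt_reg_r (2 * v)); [lra|].
    rewrite Rinv_l by lra. lra. }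
  destruct (eventually_lt_of_decrease (fun k => gso_obj m n r grp A b lam q (x k))
              (fun k => rsum n (fun j => (x (S k) j - x k j) ^ 2)) _ (dl ^ 2) Hc)
    as [N HN].
  - nra.
  - intros k. apply Rplus_le_le_0_compat; [apply rsum_nonneg; intros; apply pow2_ge_0|].
    apply Rmult_le_pos; [lra|]. apply rsum_nonneg. intros; apply rpow_nonneg.
  - intros k. apply rsum_nonneg. intros; apply pow2_ge_0.
  - intros k. apply gso_obj_descent; [exact Hv|exact Hs|apply Hpgm].
  - exists N. intros k Hk j Hj.
    assert (Hsq : (x (S k) j - x k j) ^ 2 < dl ^ 2)
      by (eapply Rle_lt_trans;
          [apply (sq_le_rsum_sq n (fun j => x (S k) j - x k j)), Hj|apply HN, Hk]).
    rewrite <- pow2_abs in Hsq. generalize (Rabs_pos (x (S k) j - x k j)). nra.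
Qed.

Lemma gnorm1_le_of_close n grp (u w : nat -> R) i M : 0 <= M ->
  group_zero n grp w i -> (forall j, (j < n)%nat -> Rabs (u j - w j) <= M) ->
  gnorm1 n grp u i <= INR n * M.
Proof.
  intros HM Hw Hclose. apply rsum_le_const. intros j Hj.
  destruct (Nat.eqb (grp j) i) eqn:E; [|exact HM].
  apply Nat.eqb_eq in E. rewrite <- (Rminus_0_r (u j)), <- (Hw j Hj E). apply Hclose, Hj.
Qed.

Lemma group_zero_iff_of_close n grp (u w : nat -> R) i K M : 0 <= M -> INR n * M < K ->
  (~ group_zero n grp u i -> K <= gnorm1 n grp u i) ->
  (~ group_zero n grp w i -> K <= gnorm1 n grp w i) ->
  (forall j, (j < n)%nat -> Rabs (u j - w j) <= M) ->
  (group_zero n grp u i <-> group_zero n grp w i).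
Proof.
  intros HM HMK Hu Hw Hclose. split; intros Hzero; apply NNPP; intros Hnz.
  - apply Hw in Hnz. enough (gnorm1 n grp w i <= INR n * M) by lra.
    apply (gnorm1_le_of_close n grp w u); [exact HM|exact Hzero|].
    intros j Hj. rewrite Rabs_minus_sym. apply Hclose, Hj.
  - apply Hu in Hnz. enough (gnorm1 n grp u i <= INR n * M) by lra.
    apply (gnorm1_le_of_close n grp u w); assumption.
Qed.

Lemma eventually_iff_of_step (P : nat -> Prop) N :
  (forall k, (N <= k)%nat -> (P (S k) <-> P k)) -> forall k, (N <= k)%nat -> (P k <-> P N).
Proof.
  intros Hstep k Hk. induction Hk as [|k Hk IH]; [tauto|].
  specialize (Hstep k Hk). tauto.
Qed.

Theorem lemma3p1 (m n r : nat) (grp : nat -> nat) (A : nat -> nat -> R) (b : nat -> R)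
  (lam q v : R) (x : nat -> nat -> R) :
  is_group_partition n r grp ->
  0 < q -> q < 1 -> 0 < lam ->
  0 < v -> (forall s, is_spectral_norm m n A s -> 2 * v * s ^ 2 < 1) ->
  pgm_gso m n r grp A b lam q v x ->
  (forall i k, (i < r)%nat -> (1 <= k)%nat -> ~ group_zero n grp (x k) i ->
     rpow (v * lam * q * (1 - q)) (/ (2 - q)) <= gnorm1 n grp (x k) i)
  /\
  (exists (N : nat) (I : nat -> Prop),
     (forall i, I i -> (i < r)%nat) /\
     forall k, (N <= k)%nat -> forall i, (i < r)%nat ->
       (I i -> ~ group_zero n grp (x k) i) /\ (~ I i -> group_zero n grp (x k) i)).
Proof.
  intros _ Hq Hq1 Hlam Hv Hspec Hpgm.
  set (K := rpow (v * lam * q * (1 - q)) (/ (2 - q))).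
  assert (Hlower : forall i k, (i < r)%nat -> (1 <= k)%nat -> ~ group_zero n grp (x k) i ->
                     K <= gnorm1 n grp (x k) i).
  { intros i [|k] Hi Hk Hnz; [lia|].
    apply (prox_min_gnorm1_lower_bound n r grp lam q v (grad_step m n A b v (x k))); auto. }
  split; [exact Hlower|].
  assert (HK : 0 < K).
  { unfold K. rewrite rpow_of_pos; [apply exp_pos|]. repeat apply Rmult_lt_0_compat; lra. }
  set (M := K / (INR n + 1)).
  assert (Hn1 : 0 < INR n + 1) by (generalize (pos_INR n); lra).
  assert (HM : 0 < M) by (apply Rdiv_lt_0_compat; lra).
  assert (HnM : INR n * M < K).
  { unfold M. apply (Rmult_lt_reg_r (INR n + 1)); [exact Hn1|].
    field_simplify; lra. }
  destruct (pgm_gso_steps_eventually_small m n r grp A b lam q v x M) as [N HN]; auto.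
  set (N' := Nat.max N 1).
  assert (Hstable : forall i, (i < r)%nat -> forall k, (N' <= k)%nat ->
                      (group_zero n grp (x k) i <-> group_zero n grp (x N') i)).
  { intros i Hi. apply (eventually_iff_of_step (fun k => group_zero n grp (x k) i)).
    intros k Hk.
    apply (group_zero_iff_of_close n grp _ _ i K M); try (apply Hlower; auto); try lia; try lra.
    intros j Hj. left. apply HN; [lia|exact Hj]. }
  exists N', (fun i => (i < r)%nat /\ ~ group_zero n grp (x N') i). split.
  - intros i [Hi _]. exact Hi.
  - intros k Hk i Hi. rewrite (Hstable i Hi k Hk). tauto.
Qed.
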